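(* There exists a constant $C>0$ such that for any $\epsilon\in(0,\tfrac12]$ there exists a ReLU neural network $\Xi_\epsilon:\mathbb{R}^2\to\mathbb{R}$ such that \[ \sup_{\xi\in[0,2\pi-\epsilon]}|\xi-\Xi_\epsilon(\cos\xi,\sin\xi)|\le\epsilon, \] $\Xi_\epsilon(\cos\xi,\sin\xi)\in[0,2\pi]$ for all $\xi\in[0,2\pi]$, and $\mathrm{depth}(\Xi_\epsilon)\le C\log(\epsilon^{-1})^2$, $\mathrm{width}(\Xi_\epsilon)\le C$.
   Context: ReLU is $\sigma(x)=\max(x,0)$. For a neural network, depth is the number of hidden layers and width the maximal number of neurons in a hidden layer. *)

From HB Require Import structures.
From mathcomp Require Import all_boot all_order all_algebra.
From mathcomp Require Import reals exp trigo.
Set Implicit Arguments. Unset Strict Implicit. Unset Printing Implicit Defensive.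
Import Order.TTheory GRing.Theory Num.Theory.
Local Open Scope ring_scope.

Definition relu (R : realType) (x : R) : R := Num.max x 0.
Definition relu_vec (R : realType) n (v : 'cV[R]_n) : 'cV[R]_n :=
  \col_i relu (v i 0).

Inductive relu_net (R : realType) : nat -> Type :=
| OutLayer : forall n, 'rV[R]_n -> R -> relu_net R n
| HiddenLayer : forall n m, 'M[R]_(m, n) -> 'cV[R]_m -> relu_net R m ->
    relu_net R n.

Fixpoint realize (R : realType) n (N : relu_net R n) : 'cV[R]_n -> R :=
  match N in relu_net _ k return 'cV[R]_k -> R with
  | OutLayer _ w c => fun x => (w *m x) 0 0 + c
  | HiddenLayer _ _ W b N' => fun x => realize N' (relu_vec (W *m x + b))
  end.

Fixpoint depth (R : realType) n (N : relu_net R n) : nat :=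
  match N with
  | OutLayer _ _ _ => 0
  | HiddenLayer _ _ _ _ N' => (depth N').+1
  end.

Fixpoint width (R : realType) n (N : relu_net R n) : nat :=
  match N with
  | OutLayer _ _ _ => 0
  | HiddenLayer _ m _ _ N' => maxn m (width N')
  end.

Definition pt2 (R : realType) (a b : R) : 'cV[R]_2 :=
  \col_(i < 2) (if val i == 0%N then a else b).

From HB Require Import structures.
From mathcomp Require Import all_boot all_order all_algebra.
From mathcomp Require Import topology normedtype derive.
From mathcomp Require Import reals exp trigo.
From mathcomp Require Import ring lra zify.
Set Implicit Arguments. Unset Strict Implicit. Unset Printing Implicit Defensive.
Import Order.TTheory GRing.Theory Num.Theory.
Import numFieldNormedType.Exports.
Local Open Scope ring_scope.

(* Fold xi in [0, 2 pi] to th in [0, pi], with cos th = cos xi and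
   sin th = |sin xi|, keeping relu (- sin xi) aside.  Then recover th by
   bisection: with beta_k = pi / 2^(k+1), k reflections t |-> beta_j - |beta_j - t|
   map th into [0, 2 beta_k], and each reflection is an affine map on (cos t, sin t)
   once relu (- sin (beta_j - t)) is known, i.e. one hidden layer.  Round k redoes
   these k reflections from (cos th, sin th) and, from the sign of sin (beta_k - t),
   turns an estimate of the (k+1)-fold reflection of th into one of the k-fold
   reflection with the same error.  After m rounds, started from the estimate 0,
   th is known within pi / 2^m; the depth is sum_(k < m) (k + 2) = O(m^2) and the
   width stays 14.  Finally a steep ramp in relu (- sin xi) chooses between th and
   2 pi - th; it may fail only for 2 pi - xi < eps.  With m ~ log2 (12 / eps) this
   gives depth O(log^2 (1 / eps)). *)

Section ReluNetworks.
Variable R : realType.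

(* Vector-output networks: unlike [relu_net], they compose. *)
Inductive vnet (m : nat) : nat -> Type :=
| VOut n : 'M[R]_(m, n) -> 'cV[R]_m -> vnet m n
| VHidden n k : 'M[R]_(k, n) -> 'cV[R]_k -> vnet m k -> vnet m n.

Fixpoint vrealize m n (N : vnet m n) : 'cV[R]_n -> 'cV[R]_m :=
  match N with
  | VOut _ A b => fun x => A *m x + b
  | VHidden _ _ W c N' => fun x => vrealize N' (relu_vec (W *m x + c))
  end.

Fixpoint vdepth m n (N : vnet m n) : nat :=
  match N with VOut _ _ _ => 0 | VHidden _ _ _ _ N' => (vdepth N').+1 end.

Fixpoint vwidth m n (N : vnet m n) : nat :=
  match N with VOut _ _ _ => 0 | VHidden _ k _ _ N' => maxn k (vwidth N') end.

Definition vnet_precomp m n p (N : vnet m n) :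
    'M[R]_(n, p) -> 'cV[R]_n -> vnet m p :=
  match N in vnet _ n' return 'M_(n', p) -> 'cV_n' -> vnet m p with
  | VOut _ A' b' => fun A b => VOut (A' *m A) (A' *m b + b')
  | VHidden _ _ W c N' => fun A b => VHidden (W *m A) (W *m b + c) N'
  end.

Fixpoint vnet_comp m n p (N1 : vnet n p) (N2 : vnet m n) : vnet m p :=
  match N1 with
  | VOut _ A b => vnet_precomp N2 A b
  | VHidden _ _ W c N1' => VHidden W c (vnet_comp N1' N2)
  end.

Lemma vrealize_precomp m n p (N : vnet m n) (A : 'M_(n, p)) b x :
  vrealize (vnet_precomp N A b) x = vrealize N (A *m x + b).
Proof. by case: N A b => [n' A' b'|n' k W c N'] A b /=; rewrite mulmxDr mulmxA addrA. Qed.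

Lemma vrealize_comp m n p (N1 : vnet n p) (N2 : vnet m n) x :
  vrealize (vnet_comp N1 N2) x = vrealize N2 (vrealize N1 x).
Proof.
elim: N1 N2 x => [p' A b|p' k W c N1 IH] N2 x /=; first exact: vrealize_precomp.
by rewrite IH.
Qed.

Lemma vdepth_precomp m n p (N : vnet m n) (A : 'M_(n, p)) b :
  vdepth (vnet_precomp N A b) = vdepth N.
Proof. by case: N A b. Qed.

Lemma vwidth_precomp m n p (N : vnet m n) (A : 'M_(n, p)) b :
  vwidth (vnet_precomp N A b) = vwidth N.
Proof. by case: N A b. Qed.

Lemma vdepth_comp m n p (N1 : vnet n p) (N2 : vnet m n) :
  vdepth (vnet_comp N1 N2) = (vdepth N1 + vdepth N2)%N.
Proof. by elim: N1 N2 => [p' A b|p' k W c N1 IH] N2 /=; rewrite ?vdepth_precomp ?IH. Qed.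

Lemma vwidth_comp m n p (N1 : vnet n p) (N2 : vnet m n) :
  vwidth (vnet_comp N1 N2) = maxn (vwidth N1) (vwidth N2).
Proof.
elim: N1 N2 => [p' A b|p' k W c N1 IH] N2 /=; first by rewrite vwidth_precomp max0n.
by rewrite IH maxnA.
Qed.

Fixpoint relu_net_of_vnet n (N : vnet 1 n) : relu_net R n :=
  match N with
  | VOut _ A b => OutLayer A (b 0 0)
  | VHidden _ _ W c N' => HiddenLayer W c (relu_net_of_vnet N')
  end.

Lemma realize_relu_net_of_vnet n (N : vnet 1 n) x :
  realize (relu_net_of_vnet N) x = vrealize N x 0 0.
Proof. by elim: N x => [n' A b|n' k W c N IH] x /=; rewrite ?mxE ?IH. Qed.

Lemma depth_relu_net_of_vnet n (N : vnet 1 n) : depth (relu_net_of_vnet N) = vdepth N.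
Proof. by elim: N => //= n' k W c N ->. Qed.

Lemma width_relu_net_of_vnet n (N : vnet 1 n) : width (relu_net_of_vnet N) = vwidth N.
Proof. by elim: N => //= n' k W c N ->. Qed.

Definition realizable m n (f : 'cV[R]_n -> 'cV[R]_m) (d w : nat) :=
  exists N : vnet m n, vrealize N =1 f /\ (vdepth N <= d)%N /\ (vwidth N <= w)%N.

Lemma realizable_comp m n p (f : 'cV_p -> 'cV_n) (g : 'cV_n -> 'cV_m) d1 w1 d2 w2 :
  realizable f d1 w1 -> realizable g d2 w2 ->
  realizable (g \o f) (d1 + d2) (maxn w1 w2).
Proof.
move=> [N1 [E1 [D1 W1]]] [N2 [E2 [D2 W2]]]; exists (vnet_comp N1 N2); split.
  by move=> x; rewrite vrealize_comp E1 E2.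
rewrite vdepth_comp vwidth_comp; split; first exact: leq_add.
by rewrite geq_max !leq_max W1 W2 orbT.
Qed.

Lemma eq_realizable m n (f g : 'cV_n -> 'cV_m) d w :
  f =1 g -> realizable f d w -> realizable g d w.
Proof. by move=> fg [N [E H]]; exists N; split=> // x; rewrite E fg. Qed.

Lemma realizable_le m n (f : 'cV_n -> 'cV_m) d w d' w' :
  (d <= d')%N -> (w <= w')%N -> realizable f d w -> realizable f d' w'.
Proof.
move=> dd ww [N [E [D W]]]; exists N; split=> //.
by split; [exact: leq_trans dd | exact: leq_trans ww].
Qed.

Lemma realizable_id n : realizable (@id 'cV[R]_n) 0 0.
Proof. by exists (VOut 1%:M 0); split=> // x /=; rewrite mul1mx addr0. Qed.

(* In [Type], so that the coefficients can be read off as weights. *)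
Definition affine_fun n (g : 'cV[R]_n -> R) :=
  {a : 'I_n -> R & {c : R | forall x, g x = \sum_i a i * x i 0 + c}}.

Lemma affine_cst n (c : R) : affine_fun (fun _ : 'cV_n => c).
Proof. by exists (fun _ => 0), c => x; rewrite big1 ?add0r // => i _; rewrite mul0r. Qed.

Lemma affine_coord n (i : 'I_n) : affine_fun (fun x => x i 0).
Proof.
exists (fun j => (j == i)%:R), 0 => x.
by rewrite addr0 (bigD1 i) //= eqxx mul1r big1 ?addr0 // => j /negbTE ->; rewrite mul0r.
Qed.

Lemma affineD n (g h : 'cV_n -> R) :
  affine_fun g -> affine_fun h -> affine_fun (fun x => g x + h x).
Proof.
move=> [a [c Hg]] [b [d Hh]]; exists (fun i => a i + b i), (c + d) => x.
have -> : \sum_i (a i + b i) * x i 0 = \sum_i a i * x i 0 + \sum_i b i * x i 0.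
  by rewrite -big_split; apply: eq_bigr => i _; rewrite mulrDl.
by rewrite Hg Hh addrACA.
Qed.

Lemma affineZ n (k : R) (g : 'cV_n -> R) :
  affine_fun g -> affine_fun (fun x => k * g x).
Proof.
move=> [a [c Hg]]; exists (fun i => k * a i), (k * c) => x.
by rewrite Hg mulrDr mulr_sumr; congr (_ + _); apply: eq_bigr => i _; rewrite mulrA.
Qed.

Lemma affineN n (g : 'cV_n -> R) : affine_fun g -> affine_fun (fun x => - g x).
Proof.
move=> /(affineZ (-1)) [a [c Hg]]; exists a, c => x; by rewrite -Hg mulN1r.
Qed.

Lemma affineB n (g h : 'cV_n -> R) :
  affine_fun g -> affine_fun h -> affine_fun (fun x => g x - h x).
Proof. by move=> Hg Hh; apply: affineD => //; apply: affineN. Qed.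

Lemma realizable_layer n m k (h : 'I_k -> 'cV[R]_n -> R) (o : 'I_m -> 'cV[R]_k -> R) :
  (forall i, affine_fun (h i)) -> (forall j, affine_fun (o j)) ->
  realizable (fun x => \col_j o j (\col_i relu (h i x))) 1 k.
Proof.
move=> Hh Ho.
pose W := \matrix_(i < k, l < n) projT1 (Hh i) l.
pose c := \col_(i < k) sval (projT2 (Hh i)).
pose A := \matrix_(j < m, l < k) projT1 (Ho j) l.
pose b := \col_(j < m) sval (projT2 (Ho j)).
exists (VHidden W c (VOut A b)); split; last by rewrite /= maxn0.
move=> x /=; apply/matrixP => j z; rewrite ord1 !mxE (svalP (projT2 (Ho j))).
congr (_ + _); apply: eq_bigr => l _; rewrite /relu_vec !mxE; congr (_ * relu _).
by rewrite (svalP (projT2 (Hh l))); congr (_ + _); apply: eq_bigr => l' _; rewrite mxE.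
Qed.

Lemma realizable_affine n m (o : 'I_m -> 'cV[R]_n -> R) :
  (forall j, affine_fun (o j)) -> realizable (fun x => \col_j o j x) 0 0.
Proof.
move=> Ho.
pose A := \matrix_(j < m, l < n) projT1 (Ho j) l.
pose b := \col_(j < m) sval (projT2 (Ho j)).
exists (VOut A b); split=> // x /=; apply/matrixP => j z.
rewrite ord1 !mxE (svalP (projT2 (Ho j))).
by congr (_ + _); apply: eq_bigr => l _; rewrite !mxE.
Qed.

Lemma relu_id (z : R) : 0 <= z -> relu z = z.
Proof. by move=> h; rewrite /relu max_l. Qed.

Lemma relu_eq0 (z : R) : z <= 0 -> relu z = 0.
Proof. by move=> h; rewrite /relu max_r. Qed.

Lemma relu_ge0 (z : R) : 0 <= relu z.
Proof. by rewrite /relu le_max lexx orbT. Qed.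

Lemma relu_subN (z : R) : relu z - relu (- z) = z.
Proof.
case: (lerP 0 z) => h; first by rewrite relu_id // relu_eq0 ?subr0 // oppr_le0.
by rewrite relu_eq0 ?ltW // relu_id ?sub0r ?opprK // oppr_ge0 ltW.
Qed.

Lemma relu_addN (z : R) : relu z + relu (- z) = `|z|.
Proof.
case: (lerP 0 z) => h.
  by rewrite relu_id // relu_eq0 ?addr0 ?ger0_norm // oppr_le0.
by rewrite relu_eq0 ?ltW // relu_id ?add0r ?ltr0_norm // oppr_ge0 ltW.
Qed.

End ReluNetworks.

Ltac affine_tac := repeat first [ apply: affineD | apply: affineB | apply: affineN
  | apply: affineZ | apply: affine_coord | apply: affine_cst ].

Ltac relu_case z := let h := fresh "hz" in
  case: (lerP 0 z) => h; [rewrite (relu_id h) | rewrite (relu_eq0 (ltW h))].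

Notation reg x i := (x (inord i) 0).

Section Registers.
Variable R : realType.

(* Register [j] is either kept, as [relu x_j - relu (- x_j)], or overwritten by
   [k0 j], and then receives [c1 j * relu (e1 x) + c2 j * relu (e2 x)]; this is
   one hidden layer with [2 * 6 + 2] neurons. *)
Definition reg_step (keep : 'I_6 -> bool) (k0 c1 c2 : 'I_6 -> R)
    (e1 e2 : 'cV[R]_6 -> R) (x : 'cV[R]_6) : 'cV[R]_6 :=
  \col_j ((if keep j then x j 0 else k0 j) + c1 j * relu (e1 x) + c2 j * relu (e2 x)).

Lemma realizable_reg_step keep (k0 c1 c2 : 'I_6 -> R) e1 e2 :
  affine_fun e1 -> affine_fun e2 -> realizable (reg_step keep k0 c1 c2 e1 e2) 1 14.
Proof.
move=> H1 H2.
pose h := fun i : 'I_14 =>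
  if (i < 6)%N then (fun x : 'cV[R]_6 => x (inord i) 0)
  else if (i < 12)%N then (fun x : 'cV[R]_6 => - x (inord (i - 6)) 0)
  else if nat_of_ord i == 12%N then e1 else e2.
pose o := fun j : 'I_6 =>
  if keep j then (fun y : 'cV[R]_14 => y (inord j) 0 - y (inord (j + 6)) 0
                           + c1 j * y (inord 12) 0 + c2 j * y (inord 13) 0)
  else (fun y : 'cV[R]_14 => k0 j + c1 j * y (inord 12) 0 + c2 j * y (inord 13) 0).
apply: eq_realizable (@realizable_layer R 6 6 14 h o _ _).
- move=> x; apply/matrixP => j z; rewrite ord1 !mxE /o.
  have v12 : nat_of_ord (inord 12 : 'I_14) = 12%N by rewrite inordK.
  have v13 : nat_of_ord (inord 13 : 'I_14) = 13%N by rewrite inordK.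
  have vj : nat_of_ord (inord j : 'I_14) = j by rewrite inordK // (leq_trans (ltn_ord j)).
  have vj6 : nat_of_ord (inord (j + 6) : 'I_14) = (j + 6)%N.
    by rewrite inordK // -[14%N]/(8 + 6)%N ltn_add2r (leq_trans (ltn_ord j)).
  case: (keep j); rewrite !mxE /h ?vj ?vj6 v12 v13 //= ltn_ord.
  rewrite ltnNge leq_addl /= -[12%N]/(6 + 6)%N ltn_add2r ltn_ord addnK inord_val.
  by rewrite relu_subN.
- move=> i; rewrite /h; case: ifP => _; first exact: affine_coord.
  by case: ifP => _; [apply: affineN; apply: affine_coord | case: ifP].
- by move=> j; rewrite /o; case: (keep j); affine_tac.
Qed.

End Registers.

Section Trigonometry.
Variable R : realType.

Lemma ler_cos (a b : R) : 0 <= a -> a <= b -> b <= pi -> cos b <= cos a.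
Proof.
move=> a0 ab bpi; case: (eqVneq a b) => [->//|nab].
apply: ltW; rewrite ltr_cos ?in_itv /= ?a0 ?(le_trans a0 ab) ?bpi //.
  by rewrite lt_neqAle nab.
exact: le_trans bpi.
Qed.

Lemma sin_ge_cos1_mul (z : R) : 0 <= z <= 1 -> cos 1 * z <= sin z.
Proof.
move=> /andP[z0 z1].
have [c Hc E] := @MVT_segment R sin cos 0 z z0 (fun x _ => is_derive_sin x)
   (continuous_subspaceT (@continuous_sin R)).
move: Hc; rewrite in_itv /= => /andP[c0 cz].
rewrite sin0 !subr0 in E; rewrite E ler_wpM2r // ler_cos //.
  exact: le_trans z1.
by have := @pi_ge2 R; lra.
Qed.

Definition jordan_const : R := 2 / cos 1.

(* A weak form of Jordan's inequality [2 x / pi <= sin x]. *)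
Lemma le_jordan_sin (z : R) : 0 <= z <= pi / 2 -> z <= jordan_const * sin z.
Proof.
move=> /andP[z0 zp].
have c1 : 0 < cos 1 :> R by apply: cos1_gt0.
suff : cos 1 / 2 * z <= sin z.
  by rewrite /jordan_const -ler_pdivrMl ?divr_gt0 // invf_div.
have ph := @pihalf_lt2 R.
case: (lerP z 1) => z1.
  have := sin_ge_cos1_mul (z := z); rewrite z0 z1 => /(_ isT).
  have : cos 1 / 2 * z <= cos 1 * z by rewrite ler_wpM2r // ler_pdivrMr //; lra.
  lra.
have s1 := sin_ge_cos1_mul (z := (1 : R)); rewrite ler01 lexx /= mulr1 in s1.
have : sin 1 <= sin z.
  case: (eqVneq z 1) => [->//|n1]; apply: ltW.
  rewrite ltr_sin // ?in_itv /=; apply/andP; split; lra.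
have : cos 1 / 2 * z <= cos 1 by rewrite -[X in _ <= X]mulr1 -mulrA ler_wpM2l; lra.
lra.
Qed.

Lemma jordan_const_gt0 : 0 < jordan_const.
Proof. by rewrite divr_gt0 // cos1_gt0. Qed.

End Trigonometry.

Section Bisection.
Variable R : realType.

Definition dyadic_angle (k : nat) : R := pi / 2 ^+ k.+1.

Lemma dyadic_angle_gt0 k : 0 < dyadic_angle k.
Proof. by rewrite divr_gt0 ?pi_gt0 // exprn_gt0. Qed.

Lemma dyadic_angleS k : 2 * dyadic_angle k.+1 = dyadic_angle k.
Proof. by rewrite /dyadic_angle exprS; field; rewrite gt_eqF // exprn_gt0. Qed.

Lemma dyadic_angle0 : 2 * dyadic_angle 0 = pi.
Proof. by rewrite /dyadic_angle expr1 mulrC divfK ?pnatr_eq0. Qed.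

Lemma dyadic_angle_le k : dyadic_angle k <= pi / 2.
Proof.
rewrite ler_pM2l ?pi_gt0 // lef_pV2 ?posrE ?exprn_gt0 //.
by rewrite -[X in X <= _]expr1 ler_eXn2l // ltr1n.
Qed.

Definition reflect_angle (b t : R) : R := b - `|b - t|.

Fixpoint reflected_angle (t : R) (k : nat) : R :=
  if k is k'.+1 then reflect_angle (dyadic_angle k') (reflected_angle t k') else t.

Lemma reflected_angle_itv (t : R) k :
  0 <= t <= pi -> 0 <= reflected_angle t k <= 2 * dyadic_angle k.
Proof.
move=> /andP[t0 tp]; elim: k => [|k /andP[h0 h1]] /=; first by rewrite dyadic_angle0 t0.
rewrite /reflect_angle dyadic_angleS; have := dyadic_angle_gt0 k.
case: (lerP 0 (dyadic_angle k - reflected_angle t k)) => h;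
  [rewrite ger0_norm // | rewrite ltr0_norm //]; move=> ?; apply/andP; split; lra.
Qed.

(* [(cos, sin)] of [b - |b - t|] is affine in [(cos t, sin t)] and
   [relu (- sin (b - t))], so one hidden layer performs the reflection. *)
Lemma cos_sin_reflect_angle (b t : R) : b <= pi -> 0 <= t <= 2 * b ->
  let r := relu (- sin (b - t)) in
  cos (reflect_angle b t) = cos t + 2 * sin b * r /\
  sin (reflect_angle b t) = sin t - 2 * cos b * r.
Proof.
move=> bpi /andP[t0 tb] r; rewrite /r /reflect_angle.
case: (lerP t b) => h.
  have sg : 0 <= sin (b - t) by rewrite sin_ge0_pi //; apply/andP; split; lra.
  by rewrite relu_eq0 ?oppr_le0 // !mulr0 addr0 subr0 (_ : b - (b - t) = t) //; ring.
have -> : sin (b - t) = - sin (t - b) by rewrite -sinN opprB.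
rewrite opprK relu_id; last by rewrite sin_ge0_pi //; apply/andP; split; lra.
have tE : t = b + (t - b) by rewrite addrC subrK.
move: (t - b) tE => u ->.
by rewrite cosB cosD sinB sinD; split; ring.
Qed.

(* The sign of [sin (b - t)] tells on which side of [b] the angle [t] lies;
   since [|b - t| <= jordan_const * |sin (b - t)|], the two ramps below undo the
   reflection on an estimate of [b - |b - t|] without increasing its error. *)
Lemma refine_estimate (b t v d : R) : b <= pi / 2 -> 0 <= t <= 2 * b -> 0 <= v ->
  `|v - reflect_angle b t| <= d ->
  let s := sin (b - t) in
  let v' := b - relu (b - v - jordan_const R * relu (- s))
              + relu (b - v - jordan_const R * relu s) in
  `|v' - t| <= d /\ 0 <= v' <= 2 * b.
Proof.
move=> bp /andP[t0 tb] v0 + s v'; rewrite {}/v' {}/s /reflect_angle.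
rewrite ler_norml => /andP[hd1 hd2].
case: (lerP t b) => h.
  have sg : 0 <= sin (b - t) by rewrite sin_ge0_pi //; apply/andP; split; lra.
  have hJ : b - t <= jordan_const R * sin (b - t).
    by apply: le_jordan_sin; apply/andP; split; lra.
  rewrite (relu_eq0 (_ : - sin (b - t) <= 0)) ?oppr_le0 // (relu_id sg) mulr0 subr0.
  rewrite ger0_norm ?subr_ge0 // in hd1 hd2.
  set w := jordan_const R * sin (b - t) in hJ *.
  relu_case (b - v); relu_case (b - v - w); split; rewrite ?ler_norml;
    apply/andP; split; lra.
have sg : 0 <= sin (t - b) by rewrite sin_ge0_pi //; apply/andP; split; lra.
have hJ : t - b <= jordan_const R * sin (t - b).
  by apply: le_jordan_sin; apply/andP; split; lra.
have -> : sin (b - t) = - sin (t - b) by rewrite -sinN opprB.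
rewrite opprK (relu_eq0 (_ : - sin (t - b) <= 0)) ?oppr_le0 // (relu_id sg) mulr0 subr0.
rewrite ltr0_norm ?subr_lt0 // in hd1 hd2.
set w := jordan_const R * sin (t - b) in hJ *.
relu_case (b - v); relu_case (b - v - w); split; rewrite ?ler_norml;
  apply/andP; split; lra.
Qed.

End Bisection.

Section BisectionNetwork.
Variable R : realType.

Local Notation beta := (dyadic_angle R).
Local Notation J := (jordan_const R).

(* Register use: [cos th], [sin th], [relu (- sin xi)], the working pair
   [(cos t, sin t)], and the current estimate. *)
Definition regs (a b c d e v : R) : 'cV[R]_6 := \col_(j < 6) nth 0 [:: a; b; c; d; e; v] j.

Ltac regs_ext := apply/matrixP => -[[|[|[|[|[|[|//]]]]]] ?] -[[|//] ?];
  rewrite !mxE /= ?inordK //=.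

Definition reflect_layer (k : nat) : 'cV[R]_6 -> 'cV[R]_6 :=
  reg_step (fun _ => true) (fun _ => 0)
    (fun j => if nat_of_ord j == 3%N then 2 * sin (beta k)
              else if nat_of_ord j == 4%N then - (2 * cos (beta k)) else 0)
    (fun _ => 0)
    (fun x => - (sin (beta k) * reg x 3 - cos (beta k) * reg x 4)) (fun _ => 0).

Definition sign_layer (k : nat) : 'cV[R]_6 -> 'cV[R]_6 :=
  reg_step (fun j => (nat_of_ord j != 3%N) && (nat_of_ord j != 4%N)) (fun _ => 0)
    (fun j => (nat_of_ord j == 3%N)%:R) (fun j => (nat_of_ord j == 4%N)%:R)
    (fun x => sin (beta k) * reg x 3 - cos (beta k) * reg x 4)
    (fun x => - (sin (beta k) * reg x 3 - cos (beta k) * reg x 4)).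

Definition estimate_layer (k : nat) : 'cV[R]_6 -> 'cV[R]_6 :=
  reg_step (fun j => nat_of_ord j != 5%N) (fun _ => beta k)
    (fun j => - (nat_of_ord j == 5%N)%:R) (fun j => (nat_of_ord j == 5%N)%:R)
    (fun x => beta k - reg x 5 - J * reg x 4)
    (fun x => beta k - reg x 5 - J * reg x 3).

Definition reload (x : 'cV[R]_6) : 'cV[R]_6 :=
  \col_(j < 6) reg x (if nat_of_ord j == 3%N then 0 else if nat_of_ord j == 4%N then 1 else j).

Fixpoint reflections (k : nat) : 'cV[R]_6 -> 'cV[R]_6 :=
  if k is k'.+1 then reflect_layer k' \o reflections k' else id.

Definition refine_round (k : nat) : 'cV[R]_6 -> 'cV[R]_6 :=
  estimate_layer k \o sign_layer k \o reflections k \o reload.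

Fixpoint refine_rounds (k : nat) : 'cV[R]_6 -> 'cV[R]_6 :=
  if k is k'.+1 then refine_rounds k' \o refine_round k' else id.

Lemma realizable_reflections k : realizable (reflections k) k 14.
Proof.
elim: k => [|k IH]; first exact: realizable_le (realizable_id R 6).
have step : realizable (reflect_layer k) 1 14.
  by apply: realizable_reg_step; affine_tac.
by apply: realizable_le (realizable_comp IH step); rewrite ?addn1 ?maxnn.
Qed.

Lemma realizable_refine_round k : realizable (refine_round k) k.+2 14.
Proof.
have reload_net : realizable reload 0 0.
  by apply: realizable_affine => j; case: ifP => _; [|case: ifP => _]; apply: affine_coord.
have sign_net : realizable (sign_layer k) 1 14.
  by apply: realizable_reg_step; affine_tac.
have estimate_net : realizable (estimate_layer k) 1 14.
  by apply: realizable_reg_step; affine_tac.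
have := realizable_comp (realizable_comp (realizable_comp reload_net
  (realizable_reflections k)) sign_net) estimate_net.
by rewrite add0n max0n !maxnn !addn1.
Qed.

Lemma realizable_refine_rounds k : realizable (refine_rounds k) (k * k.+2) 14.
Proof.
elim: k => [|k IH]; first exact: realizable_le (realizable_id R 6).
apply: realizable_le (realizable_comp (realizable_refine_round k) IH) => //.
by rewrite mulSn mulnS; lia.
Qed.

Lemma reloadE a b c d e v : reload (regs a b c d e v) = regs a b c a b v.
Proof. by regs_ext. Qed.

Lemma reflect_layerE k a b c t v : 0 <= t <= 2 * beta k ->
  reflect_layer k (regs a b c (cos t) (sin t) v) =
  regs a b c (cos (reflect_angle (beta k) t)) (sin (reflect_angle (beta k) t)) v.
Proof.
move=> ht; have beta_pi : beta k <= pi.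
  by apply: le_trans (dyadic_angle_le R k) _; rewrite ler_pdivrMr // ler_peMr ?ler1n // pi_ge0.
have [Ec Es] := cos_sin_reflect_angle beta_pi ht.
by regs_ext; rewrite ?mul0r ?addr0 // -sinB ?Ec ?Es ?mulNr.
Qed.

Lemma reflectionsE k a b c th v : 0 <= th <= pi ->
  reflections k (regs a b c (cos th) (sin th) v) =
  regs a b c (cos (reflected_angle th k)) (sin (reflected_angle th k)) v.
Proof.
by move=> hth; elim: k => //= k ->; rewrite reflect_layerE // reflected_angle_itv.
Qed.

Lemma sign_layerE k a b c d e v :
  let s := sin (beta k) * d - cos (beta k) * e in
  sign_layer k (regs a b c d e v) = regs a b c (relu s) (relu (- s)) v.
Proof. by regs_ext; rewrite ?mul0r ?mul1r ?addr0 ?add0r. Qed.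

Lemma estimate_layerE k a b c d e v :
  estimate_layer k (regs a b c d e v) =
  regs a b c d e (beta k - relu (beta k - v - J * e) + relu (beta k - v - J * d)).
Proof. by regs_ext; rewrite ?oppr0 ?mul0r ?addr0 ?mulN1r ?mul1r. Qed.

Lemma refine_roundE k th c d e v : 0 <= th <= pi ->
  let s := sin (beta k - reflected_angle th k) in
  refine_round k (regs (cos th) (sin th) c d e v) =
  regs (cos th) (sin th) c (relu s) (relu (- s))
       (beta k - relu (beta k - v - J * relu (- s)) + relu (beta k - v - J * relu s)).
Proof. by move=> hth; rewrite /refine_round /= reloadE reflectionsE // sign_layerE estimate_layerE -sinB. Qed.

Lemma refine_rounds_spec k th c d e v err : 0 <= th <= pi -> 0 <= v <= 2 * beta k ->
  `|v - reflected_angle th k| <= err ->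
  exists d' e' v', refine_rounds k (regs (cos th) (sin th) c d e v) =
                   regs (cos th) (sin th) c d' e' v' /\ `|v' - th| <= err /\ 0 <= v' <= pi.
Proof.
move=> hth; elim: k d e v => [|k IH] d e v /= hv hd.
  by exists d, e, v; rewrite -dyadic_angle0.
have /andP[v0 _] := hv.
have [hd' hv'] := refine_estimate (dyadic_angle_le R k) (reflected_angle_itv k hth) v0 hd.
by rewrite refine_roundE //; apply: IH.
Qed.

End BisectionNetwork.

Section AngleNetwork.
Variable R : realType.

Definition layer_of n m k (hs : seq ('cV[R]_n -> R)) (os : seq ('cV[R]_k -> R))
    (x : 'cV[R]_n) : 'cV[R]_m :=
  \col_(j < m) nth (fun _ => 0) os j (\col_(i < k) relu (nth (fun _ => 0) hs i x)).

Lemma realizable_layer_of n m k (hs : seq ('cV[R]_n -> R)) (os : seq ('cV[R]_k -> R)) :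
  (forall i : 'I_k, affine_fun (nth (fun _ => 0) hs i)) ->
  (forall j : 'I_m, affine_fun (nth (fun _ => 0) os j)) ->
  realizable (layer_of m hs os) 1 k.
Proof. exact: realizable_layer. Qed.

Definition input_layer : 'cV[R]_2 -> 'cV[R]_6 :=
  @layer_of 2 6 4
             [:: fun x : 'cV[R]_2 => x (inord 0) 0; fun x : 'cV[R]_2 => - x (inord 0) 0;
                 fun x : 'cV[R]_2 => x (inord 1) 0; fun x : 'cV[R]_2 => - x (inord 1) 0]
             [:: fun y : 'cV[R]_4 => y (inord 0) 0 - y (inord 1) 0;
                 fun y : 'cV[R]_4 => y (inord 2) 0 + y (inord 3) 0; fun y : 'cV[R]_4 => y (inord 3) 0].

(* The output is [v] if [sin xi >= 0], and [2 pi - v] as soon as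
   [slope * relu (- sin xi) >= 2 pi - 2 v]. *)
Definition output_layer (slope : R) : 'cV[R]_6 -> 'cV[R]_1 :=
  @layer_of 6 1 3
             [:: fun x : 'cV[R]_6 => reg x 5; fun x : 'cV[R]_6 => - reg x 5;
                 fun x : 'cV[R]_6 => 2 * pi - 2 * reg x 5 - slope * reg x 2]
             [:: fun y : 'cV[R]_3 => 2 * pi - (y (inord 0) 0 - y (inord 1) 0) - y (inord 2) 0].

Lemma input_layerE a b : input_layer (pt2 a b) = regs a `|b| (relu (- b)) 0 0 0.
Proof.
apply/matrixP => -[[|[|[|[|[|[|//]]]]]] ?] -[[|//] ?].
all: rewrite !mxE /= ?mxE ?inordK //= ?mxE /= ?inordK //=.
  exact: relu_subN.
exact: relu_addN.
Qed.

Lemma output_layerE slope a b c d e v :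
  output_layer slope (regs a b c d e v) 0 0 = 2 * pi - v - relu (2 * pi - 2 * v - slope * c).
Proof. by rewrite !mxE /= ?mxE ?inordK //= ?mxE /= ?inordK //= relu_subN. Qed.

Definition angle_network (slope : R) (m : nat) : 'cV[R]_2 -> 'cV[R]_1 :=
  output_layer slope \o refine_rounds m \o input_layer.

Lemma realizable_angle_network slope m :
  realizable (angle_network slope m) (m * m.+2).+2 14.
Proof.
have input_net : realizable input_layer 1 4.
  apply: realizable_layer_of.
    by move=> -[[|[|[|[|//]]]] ?] /=; affine_tac.
  by move=> -[[|[|[|[|[|[|//]]]]]] ?] /=; affine_tac.
have output_net : realizable (output_layer slope) 1 3.
  apply: realizable_layer_of; last by move=> -[[|//] ?] /=; affine_tac.
  by move=> -[[|[|[|//]]] ?] /=; affine_tac.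
apply: realizable_le (realizable_comp (realizable_comp input_net
  (realizable_refine_rounds R m)) output_net) => //.
by rewrite add1n addn1.
Qed.

End AngleNetwork.

Section Unfolding.
Variable R : realType.

Definition fold_angle (xi : R) : R := if xi <= pi then xi else 2 * pi - xi.

Lemma cos_2piB (x : R) : cos (2 * pi - x) = cos x.
Proof. by rewrite cosB mulr_natl cos2pi sin2pi mul1r mul0r addr0. Qed.

Lemma sin_2piB (x : R) : sin (2 * pi - x) = - sin x.
Proof. by rewrite sinB mulr_natl cos2pi sin2pi mul1r mul0r sub0r. Qed.

Lemma fold_angle_spec (xi : R) : 0 <= xi <= 2 * pi ->
  let th := fold_angle xi in
  [/\ 0 <= th <= pi, cos th = cos xi, sin th = `|sin xi| & relu (- sin xi) =
      (if xi <= pi then 0 else sin th)].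
Proof.
move=> /andP[xi0 xi2] th; rewrite /th /fold_angle; case: ifP => h.
  have s0 : 0 <= sin xi by rewrite sin_ge0_pi // xi0 h.
  by rewrite xi0 h ger0_norm // relu_eq0 // oppr_le0.
move/negbT: h; rewrite -ltNge => h.
have s0 : 0 <= sin (2 * pi - xi) by rewrite sin_ge0_pi //; apply/andP; split; lra.
rewrite cos_2piB; rewrite sin_2piB in s0 *.
rewrite ler0_norm -?oppr_ge0 // relu_id //.
by split=> //; apply/andP; split; lra.
Qed.

Lemma angle_network_spec slope m (xi : R) : 0 <= xi <= 2 * pi ->
  exists v, angle_network slope m (pt2 (cos xi) (sin xi)) 0 0 =
              2 * pi - v - relu (2 * pi - 2 * v - slope * relu (- sin xi))
         /\ `|v - fold_angle xi| <= 2 * dyadic_angle R m /\ 0 <= v <= pi.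
Proof.
move=> hxi; have [hth Ec Es _] := fold_angle_spec hxi.
have r0 : 0 <= (0 : R) <= 2 * dyadic_angle R m.
  by rewrite lexx mulr_ge0 // ltW // dyadic_angle_gt0.
have e0 : `|0 - reflected_angle (fold_angle xi) m| <= 2 * dyadic_angle R m.
  by have /andP[t0 t1] := reflected_angle_itv m hth; rewrite sub0r normrN ger0_norm.
have [d [e [v [E hv]]]] := refine_rounds_spec (relu (- sin xi)) 0 0 hth r0 e0.
by exists v; rewrite /angle_network /= input_layerE -Ec -Es E output_layerE.
Qed.

End Unfolding.

Section Accuracy.
Variable R : realType.

Lemma steep_slope_ge0 (eps : R) : 0 < eps -> 0 <= 2 * pi / eps * jordan_const R.
Proof.
move=> e0; apply: mulr_ge0 (ltW (jordan_const_gt0 R)); apply: divr_ge0 (ltW e0).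
by rewrite mulr_ge0 // pi_ge0.
Qed.

Lemma steep_ramp_ge (eps t : R) : 0 < eps <= 2^-1 -> eps <= t <= pi ->
  let w := 2 * pi / eps * jordan_const R * sin t in
  (t <= pi / 2 -> 2 * pi <= w) /\ (pi / 2 <= t -> 4 * (pi - t) <= w).
Proof.
move=> /andP[e0 e2] /andP[et tp] w; rewrite {}/w -mulrA.
have pi2 := @pi_ge2 R.
have K_eps : 2 * pi / eps * eps = 2 * pi by rewrite divfK // gt_eqF.
have K4 : 4 <= 2 * pi / eps by rewrite ler_pdivlMr //; lra.
have K0 : 0 <= 2 * pi / eps by lra.
split=> ht.
  have hJ : t <= jordan_const R * sin t by apply: le_jordan_sin; apply/andP; split; lra.
  rewrite -[X in X <= _]K_eps ler_wpM2l //; lra.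
have hJ : pi - t <= jordan_const R * sin t.
  have -> : sin t = sin (pi - t) by rewrite sinB sinpi cospi mul0r mulN1r sub0r opprK.
  by apply: le_jordan_sin; apply/andP; split; lra.
apply: le_trans (ler_wpM2l K0 hJ); rewrite ler_wpM2r //; lra.
Qed.

Lemma unfold_error (eps err th v w : R) : 3 * err <= eps -> eps <= th <= pi ->
  `|v - th| <= err -> 0 <= v -> 0 <= w ->
  (th <= pi / 2 -> 2 * pi <= w) -> (pi / 2 <= th -> 4 * (pi - th) <= w) ->
  `|(2 * pi - th) - (2 * pi - v - relu (2 * pi - 2 * v - w))| <= eps.
Proof.
move=> de /andP[eth thp] /[dup] /(le_trans (normr_ge0 _)) err0.
rewrite ler_norml => /andP[hd1 hd2] v0 w0 hw1 hw2.
have pi0 := @pi_gt0 R.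
case: (lerP th (pi / 2)) => hth; [have := hw1 hth | have := hw2 (ltW hth)] => hw;
  relu_case (2 * pi - 2 * v - w); rewrite ler_norml; apply/andP; split; lra.
Qed.

Lemma output_accuracy (eps err v xi : R) : 0 < eps <= 2^-1 -> 3 * err <= eps ->
  0 <= xi <= 2 * pi - eps -> `|v - fold_angle xi| <= err -> 0 <= v <= pi ->
  `|xi - (2 * pi - v - relu (2 * pi - 2 * v
                              - 2 * pi / eps * jordan_const R * relu (- sin xi)))| <= eps.
Proof.
move=> he de /andP[xi0 xie] hv /andP[v0 vp].
have /andP[e0 _] := he.
have hxi : 0 <= xi <= 2 * pi by rewrite xi0; lra.
have [/andP[th0 thp] _ _ ->] := fold_angle_spec hxi.
move: hv; rewrite /fold_angle; case: ifP => h hv.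
  have err0 := le_trans (normr_ge0 _) hv.
  rewrite mulr0 subr0 relu_id; last by lra.
  by rewrite (_ : _ - _ = - (v - xi)); [rewrite normrN; lra | ring].
rewrite {1}(_ : xi = 2 * pi - (2 * pi - xi)); last by ring.
have eth : eps <= 2 * pi - xi <= pi.
  by move/negbT: h; rewrite -ltNge => h; apply/andP; split; lra.
have [hw1 hw2] := steep_ramp_ge he eth.
apply: (unfold_error (err := err)) hw1 hw2 => //.
by rewrite mulr_ge0 ?steep_slope_ge0 // sin_ge0_pi //; apply/andP; split; lra.
Qed.

Lemma output_range (v w : R) : 0 <= v <= pi -> 0 <= w ->
  0 <= 2 * pi - v - relu (2 * pi - 2 * v - w) <= 2 * pi.
Proof.
move=> /andP[v0 vp] w0; have := @pi_ge2 R.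
by relu_case (2 * pi - 2 * v - w); move=> ?; apply/andP; split; lra.
Qed.

End Accuracy.

Section Rounds.
Variable R : realType.

Let ln2_gt0 : 0 < ln (2 : R). Proof. by rewrite ln_gt0 // ltr1n. Qed.
Let ln12_ge0 : 0 <= ln (12 : R). Proof. by rewrite ltW // ln_gt0 // ltr1n. Qed.

(* For the least [m] with [12 / eps < 2 ^ m], [m <= depth_slope * ln eps^-1]
   as soon as [eps <= 1/2]. *)
Definition depth_slope : R := (2 + ln 12 / ln 2) / ln 2.

Definition depth_const : R := 5 * depth_slope ^+ 2 + 14.

Lemma depth_const_ge14 : 14 <= depth_const.
Proof. by rewrite lerDr mulr_ge0 // sqr_ge0. Qed.

Lemma exists_rounds (x : R) : 0 <= x -> exists2 m : nat, x < m%:R & m%:R <= x + 1.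
Proof.
move=> x0; exists (Num.truncn x).+1; first by case/andP: (truncn_itv x0).
by rewrite -natr1 lerD2r; case/andP: (truncn_itv x0).
Qed.

Lemma dyadic_error_le (eps : R) m : 0 < eps ->
  (ln 12 + ln eps^-1) / ln 2 < m%:R -> 3 * (2 * dyadic_angle R m) <= eps.
Proof.
move=> e0 hm.
have P0 : 0 < (2 : R) ^+ m by rewrite exprn_gt0.
have h12 : 12 <= (2 : R) ^+ m * eps.
  rewrite -ler_pdivrMr // -ler_ln ?posrE ?divr_gt0 //.
  rewrite lnM ?posrE ?invr_gt0 // lnXn // -[ln 2 *+ m]mulr_natr mulrC.
  by rewrite ltr_pdivrMr // in hm; apply: ltW.
have -> : 3 * (2 * dyadic_angle R m) = 3 * pi / 2 ^+ m.
  by rewrite /dyadic_angle exprS; field; rewrite gt_eqF.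
rewrite ler_pdivrMr // mulrC; have := @pihalf_lt2 R; lra.
Qed.

Lemma rounds_depth_le (L : R) (m : nat) : ln 2 <= L -> (0 < m)%N ->
  m%:R <= (ln 12 + L) / ln 2 + 1 -> ((m * m.+2).+2)%:R <= depth_const * L ^+ 2.
Proof.
move=> Lge m0 hm.
have L0 : 0 <= L by apply: le_trans Lge; exact: ltW.
have q0 : 0 <= ln (12 : R) / ln 2 by rewrite divr_ge0 // ltW.
have mK : m%:R <= depth_slope * L.
  have r1 : 1 <= L / ln 2 by rewrite ler_pdivlMr // mul1r.
  have : ln 12 / ln 2 <= ln 12 / ln 2 * (L / ln 2) by rewrite ler_peMr.
  have -> : depth_slope * L = 2 * (L / ln 2) + ln 12 / ln 2 * (L / ln 2).
    by rewrite /depth_slope; field; rewrite gt_eqF.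
  by move: hm; rewrite mulrDl; lra.
have m5 : ((m * m.+2).+2 <= 5 * m * m)%N by nia.
apply: le_trans (_ : (5 * m * m)%N%:R <= _); first by rewrite ler_nat.
have mm : m%:R * m%:R <= (depth_slope * L) * (depth_slope * L) :> R by apply: ler_pM.
have LL : 0 <= L * L by rewrite mulr_ge0.
rewrite !natrM /depth_const !expr2; nra.
Qed.

Lemma rounds_for_eps (eps : R) : 0 < eps -> eps <= 2^-1 ->
  exists m : nat, 3 * (2 * dyadic_angle R m) <= eps /\
                  ((m * m.+2).+2)%:R <= depth_const * ln eps^-1 ^+ 2.
Proof.
move=> e0 e2.
have ln2_le : ln 2 <= ln eps^-1.
  by rewrite ler_ln ?posrE ?invr_gt0 // -[2]invrK lef_pV2 ?posrE ?invr_gt0.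
have x0 : 0 <= (ln 12 + ln eps^-1) / ln 2.
  by rewrite divr_ge0 ?addr_ge0 // ?ltW // (lt_le_trans ln2_gt0).
have [m hm1 hm2] := exists_rounds x0.
have m0 : (0 < m)%N by rewrite -(ltr0n R); apply: le_lt_trans hm1.
by exists m; rewrite dyadic_error_le // rounds_depth_le.
Qed.

End Rounds.

Theorem mainTheorem8 (R : realType) :
  exists C : R, 0 < C /\
  forall eps : R, 0 < eps -> eps <= 2^-1 ->
  exists Xi : relu_net R 2,
    (forall xi : R, 0 <= xi -> xi <= 2 * pi - eps ->
       `|xi - realize Xi (pt2 (cos xi) (sin xi))| <= eps) /\
    (forall xi : R, 0 <= xi -> xi <= 2 * pi ->
       0 <= realize Xi (pt2 (cos xi) (sin xi)) <= 2 * pi) /\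
    ((depth Xi)%:R <= C * (ln (eps^-1)) ^+ 2) /\
    ((width Xi)%:R <= C).
Proof.
have C14 := depth_const_ge14 R.
exists (depth_const R); split=> [|eps e0 e2]; first by apply: lt_le_trans C14.
have [m [hm hdepth]] := rounds_for_eps e0 e2.
pose slope := 2 * pi / eps * jordan_const R.
have [N [NE [ND NW]]] := realizable_angle_network slope m.
exists (relu_net_of_vnet N).
rewrite depth_relu_net_of_vnet width_relu_net_of_vnet; split; [|split; [|split]].
- move=> xi xi0 xie; have hxi : 0 <= xi <= 2 * pi.
    by rewrite xi0 (le_trans xie) // lerBlDr lerDl ltW.
  have [v [E [hv hv']]] := angle_network_spec slope m hxi.
  rewrite realize_relu_net_of_vnet NE E.
  by apply: output_accuracy hv hv'; rewrite ?e0 ?e2 ?xi0 ?xie.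
- move=> xi xi0 xi2; have hxi : 0 <= xi <= 2 * pi by rewrite xi0.
  have [v [E [_ hv]]] := angle_network_spec slope m hxi.
  by rewrite realize_relu_net_of_vnet NE E output_range // mulr_ge0 ?relu_ge0 ?steep_slope_ge0.
- by apply: le_trans hdepth; rewrite ler_nat.
- by apply: le_trans C14; rewrite ler_nat (leq_trans NW).
Qed.
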